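(* Let $T$ be a ring and $\mathcal A$ a multiplicatively closed right Ore subset of regular elements of $T$ with $1\in\mathcal A$. Suppose there exists a right $T$-module $V$ such that the injective hull $E_{T\mathcal A^{-1}}(V\otimes_T T\mathcal A^{-1})$ is not locally Artinian as a $T\mathcal A^{-1}$-module. Then $E_T(V/\tau(V))$ is not a locally Artinian $T$-module, where $\tau(V)$ is the $\mathcal A$-torsion submodule of $V$.
   Context: A module is locally Artinian if every finitely generated submodule is Artinian. $\tau(V)=\{v\in V: va=0 \text{ for some } a\in\mathcal A\}$. *)

(* Modules: a right R-module is an [lmodType R^c]
   (v . t  is written  (t : R^c) *: v). *)
From HB Require Import structures.
From mathcomp Require Import all_boot all_order all_algebra.
Set Implicit Arguments. Unset Strict Implicit. Unset Printing Implicit Defensive.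
Import GRing.Theory.
Local Open Scope ring_scope.

Definition submodule (R : pzRingType) (M : lmodType R) (P : M -> Prop) : Prop :=
  [/\ P 0, (forall x y, P x -> P y -> P (x + y)) & (forall (a : R) x, P x -> P (a *: x))].

Definition is_linear (R : pzRingType) (M N : lmodType R) (f : M -> N) : Prop :=
  (forall x y, f (x + y) = f x + f y) /\ (forall (a : R) x, f (a *: x) = a *: f x).

Definition fin_gen (R : pzRingType) (M : lmodType R) (N : M -> Prop) : Prop :=
  exists s : seq M, forall x,
    N x <-> exists c : 'I_(size s) -> R, x = \sum_(i < size s) c i *: s`_i.

Definition artinian_sub (R : pzRingType) (M : lmodType R) (N : M -> Prop) : Prop :=
  forall C : nat -> M -> Prop,
    (forall n, submodule (C n)) ->
    (forall x, C 0%N x -> N x) ->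
    (forall n x, C n.+1 x -> C n x) ->
    exists n, forall m, (n <= m)%N -> forall x, C m x <-> C n x.

Definition locally_artinian (R : pzRingType) (M : lmodType R) : Prop :=
  forall N : M -> Prop, submodule N -> fin_gen N -> artinian_sub N.

Definition injective_module (R : pzRingType) (E : lmodType R) : Prop :=
  forall (X Y : lmodType R) (f : X -> Y) (g : X -> E),
    is_linear f -> injective f -> is_linear g ->
    exists h : Y -> E, is_linear h /\ forall x, h (f x) = g x.

Definition essential_image (R : pzRingType) (M E : lmodType R) (f : M -> E) : Prop :=
  forall N : E -> Prop, submodule N -> (exists x, N x /\ x <> 0) ->
    exists m, N (f m) /\ f m <> 0.

Definition injective_hull (R : pzRingType) (M E : lmodType R) (e : M -> E) : Prop :=
  [/\ is_linear e, injective e, essential_image e & injective_module E].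

(* (E, f) is an injective hull of M/K, given through f : M -> E linear with
   kernel exactly K (i.e. f induces the embedding M/K -> E) *)
Definition injective_hull_quot (R : pzRingType) (M E : lmodType R)
    (K : M -> Prop) (f : M -> E) : Prop :=
  [/\ is_linear f, (forall v, f v = 0 <-> K v), essential_image f & injective_module E].

Definition torsion (T : pzRingType) (A : T -> Prop) (V : lmodType T^c) (v : V) : Prop :=
  exists a : T, A a /\ (a : T^c) *: v = 0.

Definition right_ore_regular (T : pzRingType) (A : T -> Prop) : Prop :=
  [/\ A 1,
      (forall a b, A a -> A b -> A (a * b)),
      (forall a, A a -> forall t, (a * t = 0 -> t = 0) /\ (t * a = 0 -> t = 0)) &
      (forall (t a : T), A a -> exists t' a', A a' /\ t * a' = a * t')].

Definition right_fractions (T : nzRingType) (A : T -> Prop) (Q : unitRingType)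
    (phi : {rmorphism T -> Q}) : Prop :=
  [/\ (forall a, A a -> phi a \is a GRing.unit),
      (forall q : Q, exists t a, A a /\ q = phi t * (phi a)^-1) &
      (forall t, phi t = 0 <-> exists a, A a /\ t * a = 0)].

(* (W, iota) is V (x)_T Q, characterized by its universal property:
   iota : V -> W is T-semilinear and every T-semilinear map from V to a right
   Q-module factors uniquely through a Q-linear map W -> X *)
Definition is_semilinear (T : nzRingType) (Q : unitRingType) (phi : {rmorphism T -> Q})
    (V : lmodType T^c) (X : lmodType Q^c) (f : V -> X) : Prop :=
  (forall x y, f (x + y) = f x + f y) /\
  (forall (t : T) x, f ((t : T^c) *: x) = (phi t : Q^c) *: f x).

Definition tensor_ext (T : nzRingType) (Q : unitRingType) (phi : {rmorphism T -> Q})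
    (V : lmodType T^c) (W : lmodType Q^c) (iota : V -> W) : Prop :=
  is_semilinear phi iota /\
  forall (X : lmodType Q^c) (f : V -> X), is_semilinear phi f ->
    exists g : W -> X, [/\ is_linear g, (forall v, g (iota v) = f v) &
      forall g' : W -> X, is_linear g' -> (forall v, g' (iota v) = f v) ->
        forall w, g' w = g w].

(* The injective hull E' of V/tau(V) is A-torsion-free, and A-divisible because it
   is injective; so its T-module structure extends uniquely to a right
   T A^-1-module structure. The map V -> E' then factors through
   V (x)_T T A^-1 -> E', which extends along the essential embedding into the hull
   E to a T-linear map E -> E'. That map is injective: its kernel is a
   T A^-1-submodule meeting no nonzero element of the tensor product. Finally, a
   descending chain of T A^-1-submodules of a finitely generated submodule of E is
   detected, after clearing denominators, by a descending chain of T-submodules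
   inside the T-span of the generators; so if E' were locally Artinian, E would be
   too. *)

From HB Require Import structures.
From mathcomp Require Import all_boot all_order all_algebra.
From mathcomp Require Import boolp.
Set Implicit Arguments. Unset Strict Implicit. Unset Printing Implicit Defensive.
Import GRing.Theory.
Local Open Scope ring_scope.

Lemma additive0 (U V : zmodType) (h : U -> V) :
  (forall x y, h (x + y) = h x + h y) -> h 0 = 0.
Proof. by move=> hD; apply: (addrI (h 0)); rewrite -hD !addr0. Qed.

Lemma additive_inj (U V : zmodType) (h : U -> V) :
  (forall x y, h (x + y) = h x + h y) -> (forall x, h x = 0 -> x = 0) -> injective h.
Proof.
move=> hD hK x y hxy; apply/eqP; rewrite -subr_eq0; apply/eqP/hK.
by apply: (addIr (h y)); rewrite -hD subrK add0r.
Qed.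

Lemma additive_sum (U V : zmodType) (h : U -> V) (I : finType) (F : I -> U) :
  (forall x y, h (x + y) = h x + h y) -> h (\sum_i F i) = \sum_i h (F i).
Proof.
by move=> hD; elim/big_rec2: _ => [|i y1 y2 _ <-]; [exact: additive0 | rewrite hD].
Qed.

Lemma rscaleK (R : unitRingType) (M : lmodType R^c) (u : R) :
  u \is a GRing.unit -> cancel (fun x : M => (u : R^c) *: x) (fun x => (u^-1 : R^c) *: x).
Proof.
move=> uu x; rewrite scalerA.
have -> : (u^-1 : R^c) * (u : R^c) = 1 by change (u * u^-1 = 1); rewrite mulrV.
exact: scale1r.
Qed.

Section Span.
Variables (R : pzRingType) (M : lmodType R).

Definition span (s : seq M) (x : M) : Prop :=
  exists c : 'I_(size s) -> R, x = \sum_(i < size s) c i *: s`_i.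

Lemma span_submodule s : submodule (span s).
Proof.
split.
- by exists (fun _ => 0); rewrite big1 // => i _; rewrite scale0r.
- move=> _ _ [c ->] [c' ->]; exists (fun i => c i + c' i).
  by rewrite -big_split; apply: eq_bigr => i _; rewrite scalerDl.
- move=> a _ [c ->]; exists (fun i => a * c i); rewrite scaler_sumr.
  by apply: eq_bigr => i _; rewrite scalerA.
Qed.

Lemma fin_gen_span s : fin_gen (span s).
Proof. by exists s. Qed.

Lemma submoduleI (P P' : M -> Prop) :
  submodule P -> submodule P' -> submodule (fun x => P x /\ P' x).
Proof.
move=> [P0 PD PZ] [P'0 P'D P'Z]; split=> [//|x y [? ?] [? ?]|a x [? ?]]; split; auto.
Qed.

End Span.

Section LinearImage.
Variables (R : pzRingType) (M N : lmodType R) (h : M -> N).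
Hypothesis hlin : is_linear h.

Lemma submodule_image (P : M -> Prop) :
  submodule P -> submodule (fun y => exists x, P x /\ y = h x).
Proof.
case: hlin => hD hZ [P0 PD PZ]; split.
- by exists 0; rewrite (additive0 hD).
- by move=> _ _ [x [Px ->]] [y [Py ->]]; exists (x + y); rewrite hD; split; auto.
- by move=> a _ [x [Px ->]]; exists (a *: x); rewrite hZ; split; auto.
Qed.

Lemma linear_span (s : seq M) x : span s x -> span (map h s) (h x).
Proof.
case: hlin => hD hZ [c ->]; rewrite /span size_map; exists c; rewrite additive_sum //.
by apply: eq_bigr => i _; rewrite hZ (nth_map 0).
Qed.

End LinearImage.

Lemma chain_le (X : Type) (C : nat -> X -> Prop) :
  (forall n x, C n.+1 x -> C n x) -> forall n m x, (n <= m)%N -> C m x -> C n x.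
Proof.
move=> Cdec n m x /subnK <-; elim: (m - n)%N => // k IHk.
by rewrite addSn => /Cdec; apply: IHk.
Qed.

Section RestrictScalars.
Variables (T Q : pzRingType) (phi : {rmorphism T -> Q}) (M : lmodType Q^c).

(* The vacuous dependency on [phi] makes the instances below specific to it. *)
Definition res_lmod : Type := (fun _ => M) phi.
HB.instance Definition _ := GRing.Zmodule.on res_lmod.

Definition res_scale (t : T^c) (x : res_lmod) : res_lmod := (phi t : Q^c) *: (x : M).

Lemma res_scaleA a b v : res_scale a (res_scale b v) = res_scale (a * b) v.
Proof. by rewrite /res_scale scalerA /= rmorphM. Qed.

Lemma res_scale1 : left_id 1 res_scale.
Proof. by move=> v; rewrite /res_scale rmorph1 scale1r. Qed.

Lemma res_scaleDr : right_distributive res_scale +%R.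
Proof. by move=> a x y; rewrite /res_scale scalerDr. Qed.

Lemma res_scaleDl v : {morph res_scale^~ v : a b / a + b}.
Proof. by move=> a b; rewrite /res_scale rmorphD scalerDl. Qed.

HB.instance Definition _ := GRing.Zmodule_isLmodule.Build T^c res_lmod
  res_scaleA res_scale1 res_scaleDr res_scaleDl.

Lemma submodule_res (P : M -> Prop) : submodule P -> @submodule _ res_lmod P.
Proof. by case=> P0 PD PZ; split=> // t x; apply: PZ. Qed.

End RestrictScalars.

Section SubLmodule.
Variables (R : pzRingType) (M : lmodType R) (P : M -> Prop).
Hypothesis sP : submodule P.

Definition submod_pred : {pred M} := fun x => `[< P x >].

Lemma submod_predP : subsemimod_closed submod_pred.
Proof.
case: sP => P0 PD PZ; split; first split.
- exact/asboolP.
- by move=> x y /asboolP Px /asboolP Py; apply/asboolP; apply: PD.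
- by move=> a x /asboolP Px; apply/asboolP; apply: PZ.
Qed.

HB.instance Definition _ := GRing.isSubmodClosed.Build R M submod_pred submod_predP.

Definition sub_lmod : Type := (fun _ => {x : M | x \in submod_pred}) sP.
HB.instance Definition _ := [isSub of sub_lmod for @sval _ _].
HB.instance Definition _ := [Choice of sub_lmod by <:].
HB.instance Definition _ := [SubChoice_isSubLmodule of sub_lmod by <:].

End SubLmodule.

Section RightAction.
Variables (T : pzRingType) (M : lmodType T^c).

Definition ract (y : M) (t : T) : M := (t : T^c) *: y.

Lemma ractA y u v : ract (ract y u) v = ract y (u * v).
Proof. by rewrite /ract scalerA. Qed.

Lemma ract1 y : ract y 1 = y.
Proof. exact: scale1r. Qed.

Lemma ractDr y z t : ract (y + z) t = ract y t + ract z t.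
Proof. exact: scalerDr. Qed.

Lemma ractDl y t s : ract y (t + s) = ract y t + ract y s.
Proof. exact: scalerDl. Qed.

Lemma ractBr y z t : ract (y - z) t = ract y t - ract z t.
Proof. exact: scalerBr. Qed.

End RightAction.

Definition torsion_free (T : pzRingType) (A : T -> Prop) (M : lmodType T^c) : Prop :=
  forall a (y : M), A a -> ract y a = 0 -> y = 0.

Definition divisible (T : pzRingType) (A : T -> Prop) (M : lmodType T^c) : Prop :=
  forall a (y : M), A a -> exists z, ract z a = y.

Section OreLocalization.
Variables (T : nzRingType) (A : T -> Prop) (Q : unitRingType) (phi : {rmorphism T -> Q}).
Hypotheses (HA : right_ore_regular A) (HF : right_fractions A phi).

Lemma ore1 : A 1.
Proof. by case: HA. Qed.

Lemma oreM a b : A a -> A b -> A (a * b).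
Proof. by case: HA => _ + _ _; apply. Qed.

Lemma ore_lreg a t : A a -> a * t = 0 -> t = 0.
Proof. by case: HA => _ _ + _ => /[apply] /(_ t) []. Qed.

Lemma ore_cond t a : A a -> exists t' a', A a' /\ t * a' = a * t'.
Proof. by case: HA => _ _ _; apply. Qed.

Lemma phi_ore_unit a : A a -> phi a \is a GRing.unit.
Proof. by case: HF => + _ _; apply. Qed.

Lemma fraction_repr q : exists t a, A a /\ q = phi t * (phi a)^-1.
Proof. by case: HF => _ + _; apply. Qed.

Lemma phi_eq0 t : phi t = 0 -> exists a, A a /\ t * a = 0.
Proof. by case: HF => _ _ /(_ t) []. Qed.

Lemma fraction_clear q : exists t a, A a /\ q * phi a = phi t.
Proof.
have [t [a [Aa ->]]] := fraction_repr q; exists t, a; split=> //.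
by rewrite mulrVK // phi_ore_unit.
Qed.

Lemma phi_eq_ore t s : phi t = phi s -> exists b, A b /\ t * b = s * b.
Proof.
move=> Ets; have [b [Ab Hb]] : exists b, A b /\ (t - s) * b = 0.
  by apply: phi_eq0; rewrite rmorphB Ets subrr.
by exists b; split=> //; apply/eqP; rewrite -subr_eq0 -mulrBl Hb.
Qed.

Lemma common_denominator (s : seq Q) :
  exists d (r : Q -> T), A d /\ forall q, q \in s -> q * phi d = phi (r q).
Proof.
elim: s => [|x s [d [r [Ad Hr]]]]; first by exists 1, (fun=> 0); split=> //; exact: ore1.
have [t [b [Ab Hb]]] := fraction_clear (x * phi d).
exists (d * b), (fun q => if q == x then t else r q * b); split; first exact: oreM.
move=> q; rewrite inE rmorphM mulrA; case: eqP => [-> _ // | _ /= qs].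
by rewrite Hr // rmorphM.
Qed.

Section FractionModule.
Variables (M : lmodType T^c) (tfM : torsion_free A M) (dvM : divisible A M).

Definition frac_rel q (y z : M) : Prop :=
  exists t a, [/\ A a, q * phi a = phi t & ract z a = ract y t].

(* Two clearings [q = t a^-1 = s r^-1] agree after right multiplication by some
   element of [A], which is cancelled by torsion-freeness. *)
Lemma frac_rel_indep q (y z : M) t a r s :
  A a -> q * phi a = phi t -> ract z a = ract y t ->
  q * phi r = phi s -> ract z r = ract y s.
Proof.
move=> Aa Hq Hz Hr; have ua := phi_ore_unit Aa.
have [r' [c [Ac Hc]]] := fraction_clear ((phi a)^-1 * phi r).
have E1 : phi (r * c) = phi (a * r') by rewrite !rmorphM -Hc !mulrA mulrV ?mul1r.
have Eq : q = phi t * (phi a)^-1 by rewrite -Hq mulrK.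
have E2 : phi (s * c) = phi (t * r').
  by rewrite rmorphM -Hr Eq -!mulrA (mulrA (phi a)^-1) Hc rmorphM.
have [b' [Ab' Hb']] := phi_eq_ore E1.
have [b [Ab Hb]] : exists b, A b /\ t * r' * b' * b = s * c * b' * b.
  by apply: phi_eq_ore; rewrite !(rmorphM _ _ b') E2.
have Acbb : A (c * (b' * b)) by apply: oreM => //; apply: oreM.
apply/eqP; rewrite -subr_eq0; apply/eqP; apply: (tfM Acbb).
rewrite ractBr !ractA.
have -> : r * (c * (b' * b)) = a * (r' * b' * b) by rewrite !mulrA Hb'.
rewrite -[ract z _]ractA Hz ractA.
have -> : t * (r' * b' * b) = s * (c * (b' * b)) by rewrite !mulrA Hb.
by rewrite subrr.
Qed.

Lemma frac_rel_uniq q (y z z' : M) : frac_rel q y z -> frac_rel q y z' -> z = z'.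
Proof.
move=> [t [a [Aa Hq Hz]]] [t' [a' [Aa' Hq' Hz']]].
apply/eqP; rewrite -subr_eq0; apply/eqP; apply: (tfM Aa').
by rewrite ractBr Hz' (frac_rel_indep Aa Hq Hz Hq') subrr.
Qed.

Lemma frac_rel_ex q (y : M) : exists z, frac_rel q y z.
Proof.
have [t [a [Aa Hq]]] := fraction_clear q; have [z Hz] := dvM (ract y t) Aa.
by exists z, t, a.
Qed.

Definition frac_scale q (y : M) : M := projT1 (cid (frac_rel_ex q y)).

Lemma frac_scaleP q y : frac_rel q y (frac_scale q y).
Proof. exact: projT2 (cid _). Qed.

Lemma frac_scaleE q y z : frac_rel q y z -> frac_scale q y = z.
Proof. exact/frac_rel_uniq/frac_scaleP. Qed.

Lemma frac_scale_clear q y r s : q * phi r = phi s -> ract (frac_scale q y) r = ract y s.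
Proof. by have [t [a [Aa Hq Hz]]] := frac_scaleP q y; apply: frac_rel_indep Hz. Qed.

Lemma frac_scale_phi t y : frac_scale (phi t) y = ract y t.
Proof.
by apply: frac_scaleE; exists t, 1; rewrite rmorph1 mulr1 ract1; split=> //; exact: ore1.
Qed.

Lemma frac_scaleA a b y : frac_scale a (frac_scale b y) = frac_scale (b * a) y.
Proof.
have [t2 [a2 [Aa2 H2]]] := fraction_clear a.
have [s [c [Ac Hc]]] := fraction_clear (b * phi t2).
apply/esym/frac_scaleE; exists s, (a2 * c); split; first exact: oreM.
  by rewrite rmorphM -!mulrA (mulrA a) H2 mulrA Hc.
rewrite -ractA (frac_scale_clear _ H2) ractA; apply: frac_scale_clear.
by rewrite rmorphM mulrA Hc.
Qed.

Definition frac_lmod : Type := (fun _ _ _ _ => M) HA HF tfM dvM.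
HB.instance Definition _ := GRing.Zmodule.on frac_lmod.

Definition frac_lmod_scale (q : Q^c) (y : frac_lmod) : frac_lmod := frac_scale q y.

Lemma frac_lmod_scaleA a b v :
  frac_lmod_scale a (frac_lmod_scale b v) = frac_lmod_scale (a * b) v.
Proof. exact: frac_scaleA. Qed.

Lemma frac_lmod_scale1 : left_id 1 frac_lmod_scale.
Proof. by move=> v; have := frac_scale_phi 1 v; rewrite rmorph1 ract1. Qed.

Lemma frac_lmod_scaleDr : right_distributive frac_lmod_scale +%R.
Proof.
move=> q x y; have [t [a [Aa Hq]]] := fraction_clear q.
apply: frac_scaleE; exists t, a; split=> //.
by rewrite ractDr !(frac_scale_clear _ Hq) ractDr.
Qed.

Lemma frac_lmod_scaleDl v : {morph frac_lmod_scale^~ v : a b / a + b}.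
Proof.
move=> q1 q2; have [c [r [Ac Hr]]] := common_denominator [:: q1; q2].
have H1 := Hr q1 (mem_head _ _); have H2 := Hr q2 (mem_last q1 [:: q2]).
apply: frac_scaleE; exists (r q1 + r q2), c; split=> //.
  by rewrite mulrDl H1 H2 rmorphD.
by rewrite ractDr (frac_scale_clear _ H1) (frac_scale_clear _ H2) ractDl.
Qed.

HB.instance Definition _ := GRing.Zmodule_isLmodule.Build Q^c frac_lmod
  frac_lmod_scaleA frac_lmod_scale1 frac_lmod_scaleDr frac_lmod_scaleDl.

Lemma frac_lmod_scale_phi t (y : frac_lmod) : (phi t : Q^c) *: y = ract (y : M) t.
Proof. exact: frac_scale_phi. Qed.

End FractionModule.

(* Multiplication by a regular [a] is an injective map [T -> T] of left
   [T]-modules; extending [1 |-> y] along it yields [z] with [z a = y]. *)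
Lemma injective_divisible (M : lmodType T^c) : injective_module M -> divisible A M.
Proof.
move=> injM a y Aa.
pose la (x : T^c^o) : T^c^o := (a * (x : T) : T).
pose gy (x : T^c^o) : M := (x : T^c) *: y.
have la_lin : is_linear la by split=> [x z | s x]; rewrite /la /= ?mulrDr ?mulrA.
have la_inj : injective la.
  move=> x z Exz; apply/eqP; rewrite -subr_eq0; apply/eqP; apply: (ore_lreg Aa).
  by rewrite mulrBr [a * _]Exz subrr.
have gy_lin : is_linear gy by split=> [x z | s x]; rewrite /gy ?scalerDl ?scalerA.
have [h [[_ hZ] Hh]] := injM _ _ la gy la_lin la_inj gy_lin.
exists (h 1); have := Hh 1; rewrite /gy scale1r => <-.
by rewrite /ract -hZ; congr h; exact: etrans (mul1r a) (esym (mulr1 a)).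
Qed.

(* A torsion element [y a = 0] of the hull would generate a submodule meeting
   the image of [V] in some [f v != 0]; the Ore condition makes [v] torsion. *)
Lemma hull_quot_torsion_free (V E : lmodType T^c) (f : V -> E) :
  injective_hull_quot (torsion A (V := V)) f -> torsion_free A E.
Proof.
move=> [[_ fZ] fK fess _] a y Aa ya0; apply: contrapT => y_neq0.
pose yT (x : E) := exists t, x = ract y t.
have yT_sub : submodule yT.
  split; first by exists 0; rewrite /ract scale0r.
  - by move=> _ _ [t ->] [s ->]; exists (t + s); rewrite ractDl.
  - by move=> s _ [t ->]; exists (t * s); rewrite -ractA.
have [v [[t fv] fv_neq0]] : exists v, yT (f v) /\ f v <> 0.
  by apply: fess => //; exists y; split; [exists 1; rewrite ract1 |].
have [t' [a' [Aa' Ht]]] := ore_cond t Aa.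
have [b [Ab Hb]] : torsion A (ract v a').
  by apply/fK; rewrite /ract fZ -/(ract _ _) fv ractA Ht -ractA ya0 /ract scaler0.
apply: fv_neq0; apply/fK; exists (a' * b); split; first exact: oreM.
exact: etrans (esym (ractA v a' b)) Hb.
Qed.

Section TensorExtension.
Variables (V : lmodType T^c) (W : lmodType Q^c) (iota : V -> W).
Hypothesis Hiota : tensor_ext phi iota.

Definition cleared (w : W) : Prop := exists a v, A a /\ (phi a : Q^c) *: w = iota v.

Lemma cleared_submodule : submodule cleared.
Proof.
have [[iD iZ] _] := Hiota; split.
- by exists 1, 0; split; [exact: ore1 | rewrite scaler0 -(additive0 iD)].
- move=> x y [a1 [v1 [A1 H1]]] [a2 [v2 [A2 H2]]].
  have [t' [a' [Aa' E]]] := ore_cond a2 A1.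
  exists (a2 * a'), ((t' : T^c) *: v1 + (a' : T^c) *: v2); split; first exact: oreM.
  rewrite scalerDr iD !iZ -H1 -H2 !scalerA.
  by congr (_ + _); [rewrite E|]; rewrite rmorphM.
- move=> q x [a [v [Aa H]]].
  have [u [c [Ac Hc]]] := fraction_clear ((phi a)^-1 * (q : Q)).
  exists c, ((u : T^c) *: v); split=> //; rewrite iZ -H !scalerA; congr (_ *: _).
  change (@GRing.mul Q q (phi c) = phi a * phi u).
  by rewrite -Hc !mulrA mulrV ?mul1r ?phi_ore_unit.
Qed.

(* [iota] factors through the submodule of cleared elements; by uniqueness in
   the universal property that factorisation composed with the inclusion is the
   identity of [W]. *)
Lemma tensor_ext_cleared w : cleared w.
Proof.
have [[iD iZ] univ] := Hiota.
pose X := sub_lmod cleared_submodule.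
have iota_cleared v : iota v \in submod_pred cleared.
  by apply/asboolP; exists 1, v; split; [exact: ore1 | rewrite rmorph1 scale1r].
pose iotaX v : X := exist _ (iota v) (iota_cleared v).
have iotaX_sl : is_semilinear phi iotaX.
  by split=> [x y | t x]; apply: val_inj; rewrite /= ?iD ?iZ.
have [g [[gD gZ] g_iota _]] := univ X iotaX iotaX_sl.
have [g0 [_ _ g0_uniq]] := univ W iota (conj iD iZ).
have val_g_lin : is_linear (fun w => val (g w)) by split=> [x y | q x]; rewrite ?gD ?gZ.
have E1 := g0_uniq _ val_g_lin (fun v => congr1 val (g_iota v)) w.
have E2 := g0_uniq id (conj (fun _ _ => erefl) (fun _ _ => erefl)) (fun _ => erefl) w.
rewrite /= in E1 E2; rewrite E2 -E1; exact/asboolP/(valP (g w)).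
Qed.

End TensorExtension.

Lemma span_res_cleared (E : lmodType Q^c) (s : seq E) x :
  span s x -> exists2 d, A d & @span _ (res_lmod phi E) s ((phi d : Q^c) *: x).
Proof.
move=> [c ->]; have [d [r [Ad Hr]]] := common_denominator [seq c i | i <- enum 'I_(size s)].
exists d => //; exists (fun i => r (c i)); rewrite scaler_sumr.
apply: eq_bigr => i _; rewrite scalerA.
change ((@GRing.mul Q (c i) (phi d) : Q^c) *: s`_i = (phi (r (c i)) : Q^c) *: s`_i).
by rewrite Hr // map_f ?mem_enum.
Qed.

(* A descending chain of [Q]-submodules inside the [Q]-span of [s] is traced,
   through [h], by the chain of their intersections with the [T]-span of [s];
   clearing denominators recovers the [Q]-submodules from these traces. *)
Lemma locally_artinian_embed (E : lmodType Q^c) (E' : lmodType T^c)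
    (h : res_lmod phi E -> E') :
  is_linear h -> injective h -> locally_artinian E' -> locally_artinian E.
Proof.
move=> hlin hinj LA N _ [s Ns] C sC C0 Cdec.
pose ST := @span _ (res_lmod phi E) s.
pose D n y := exists x, (C n x /\ ST x) /\ y = h x.
have [n0 Dn0] : exists n0, forall m, (n0 <= m)%N -> forall y, D m y <-> D n0 y.
  apply: (LA _ (span_submodule _) (fin_gen_span (map h s))).
  - move=> n; apply: (submodule_image hlin).
    by apply: submoduleI; [exact: submodule_res | exact: span_submodule].
  - by move=> y [x [[_ STx] ->]]; apply: linear_span.
  - by move=> n y [x [[Cx STx] ->]]; exists x; split=> //; split=> //; apply: Cdec.
exists n0 => m le_n0m x; split; first exact: chain_le.
move=> Cx; have Nx : N x by apply/C0/(chain_le Cdec (leq0n n0)).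
have [d Ad STdx] := span_res_cleared (proj1 (Ns x) Nx).
have Cdx : C n0 ((phi d : Q^c) *: x) by case: (sC n0) => _ _; apply.
have [x' [[Cx' _] hx']] :=
  proj2 (Dn0 m le_n0m _) (ex_intro _ _ (conj (conj Cdx STdx) erefl)).
rewrite -(rscaleK (phi_ore_unit Ad) x) (hinj _ _ hx').
by case: (sC m) => _ _; apply.
Qed.

Lemma ker_res_submodule (E : lmodType Q^c) (E' : lmodType T^c)
    (h : res_lmod phi E -> E') :
  torsion_free A E' -> is_linear h -> submodule (fun x : E => h x = 0).
Proof.
move=> tfE' [hD hZ]; have hZT t (x : E) : h ((phi t : Q^c) *: x) = ract (h x) t := hZ t x.
split; first exact: additive0 hD.
- by move=> x y hx hy; rewrite hD hx hy addr0.
- move=> q x hx; have [t [a [Aa Hq]]] := fraction_clear q.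
  apply: (tfE' _ _ Aa); rewrite -hZT scalerA.
  have -> : (phi a : Q^c) * q = phi t by exact: Hq.
  by rewrite hZT hx /ract scaler0.
Qed.

(* A nonzero kernel contains some [e w != 0], by essentiality, with [w a = iota v];
   then [f v = g (iota v) = 0], so [v] is torsion, [iota v = 0] and [w = 0]. *)
Lemma hull_extension_injective (V : lmodType T^c) (W E : lmodType Q^c) (E' : lmodType T^c)
    (iota : V -> W) (e : W -> E) (f : V -> E') (g : W -> E') (h : res_lmod phi E -> E') :
  tensor_ext phi iota -> injective_hull e -> torsion_free A E' ->
  (forall v, f v = 0 -> torsion A v) -> (forall v, g (iota v) = f v) ->
  (forall t w, g ((phi t : Q^c) *: w) = ract (g w) t) ->
  is_linear h -> (forall w, h (e w) = g w) -> injective h.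
Proof.
move=> Hiota [[eD _] _ e_ess _] tfE' fK g_iota gZ hlin he.
have [[iD iZ] _] := Hiota.
apply: additive_inj (proj1 hlin) _ => x hx; apply: contrapT => x_neq0.
have [w [hew ew_neq0]] :=
  e_ess _ (ker_res_submodule tfE' hlin) (ex_intro _ x (conj hx x_neq0)).
have [a [v [Aa av]]] := tensor_ext_cleared Hiota w.
have [b [Ab bv]] : torsion A v.
  by apply: fK; rewrite -g_iota -av gZ -he hew /ract scaler0.
have iv0 : iota v = 0.
  by rewrite -(rscaleK (phi_ore_unit Ab) (iota v)) -iZ bv (additive0 iD) scaler0.
have w0 : w = 0 by rewrite -(rscaleK (phi_ore_unit Aa) w) av iv0 scaler0.
by apply: ew_neq0; rewrite w0 (additive0 eD).
Qed.

End OreLocalization.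

Theorem lemma5p1 (T : nzRingType) (A : T -> Prop) (Q : unitRingType)
    (phi : {rmorphism T -> Q}) :
  right_ore_regular A -> right_fractions A phi ->
  forall V : lmodType T^c,
  (exists (W : lmodType Q^c) (iota : V -> W) (E : lmodType Q^c) (e : W -> E),
     [/\ tensor_ext phi iota, injective_hull e & ~ locally_artinian E]) ->
  forall (E' : lmodType T^c) (f : V -> E'),
    injective_hull_quot (torsion A (V := V)) f -> ~ locally_artinian E'.
Proof.
move=> HA HF V [W [iota [E [e [Hiota He nLA]]]]] E' f Hf LA'; apply: nLA.
have tfE' := hull_quot_torsion_free HA Hf.
have [[fD fZ] fK _ injE'] := Hf.
pose EQ := frac_lmod HA HF tfE' (injective_divisible HA injE').
have f_sl : is_semilinear phi (f : V -> EQ).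
  by split=> [|t v]; [exact: fD | rewrite frac_lmod_scale_phi; apply: fZ].
have [g [[gD gZ] g_iota _]] := proj2 Hiota EQ f f_sl.
have gZT t w : g ((phi t : Q^c) *: w) = ract (g w : E') t.
  by rewrite gZ frac_lmod_scale_phi.
have [[eD eZ] e_inj _ _] := He.
have [h [hlin he]] := injE' (res_lmod phi W) (res_lmod phi E) e g
  (conj eD (fun t => eZ (phi t))) e_inj (conj gD (fun t => gZT t)).
apply: (locally_artinian_embed HA HF hlin _ LA').
exact: (hull_extension_injective HA HF Hiota He tfE' (fun v => proj1 (fK v))
  g_iota gZT hlin he).
Qed.
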